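(* Let $L\in R[x][\partial]$ have positive order $r$ and let $k\ge r$. Then $R[x][\partial]\cdot M_k(L)=R[x][\partial]\cdot M_{k+1}(L)$ if and only if $\sigma(I_k)=I_{k+1}$.
   Context: $R$ is a principal ideal domain with quotient field $Q_R$; $\sigma$ is an $R$-automorphism of $R[x]$ with $\sigma(x)=\gamma x+\tau$ ($\gamma,\tau\in R$, $\gamma$ a unit), $\delta$ an $R$-linear $\sigma$-derivation with $\deg\delta(x)\le 1$; $R[x][\partial]$ is the Ore algebra with $\partial p=\sigma(p)\partial+\delta(p)$, inside $Q_R(x)[\partial]$. $\mathrm{cont}(L)=Q_R(x)[\partial]L\cap R[x][\partial]$; $M_k(L)=\{P\in\mathrm{cont}(L):\deg_\partial P\le k\}$; $I_k=\{[\partial^k]P:P\in M_k(L)\}\cup\{0\}$, an ideal of $R[x]$, where $[\partial^k]P$ is the coefficient of $\partial^k$ in $P$. $R[x][\partial]\cdot S$ denotes the left ideal generated by $S$, and $\sigma(I_k)=\{\sigma(f):f\in I_k\}$. *)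

From HB Require Import structures.
From mathcomp Require Import all_boot all_order all_algebra.
Set Implicit Arguments. Unset Strict Implicit. Unset Printing Implicit Defensive.
Import GRing.Theory.
Local Open Scope ring_scope.

Definition is_ideal (R : comRingType) (I : R -> Prop) : Prop :=
  [/\ I 0, (forall a b, I a -> I b -> I (a + b)) & (forall c a, I a -> I (c * a))].

Definition is_PID (R : idomainType) : Prop :=
  forall I : R -> Prop, is_ideal I -> exists g : R, forall a, I a <-> exists c, a = c * g.

(* Elements of K[\partial] are represented as {poly K}: P = \sum_i P`_i \partial^i.
   Multiplication rule: \partial * q = s q \partial + d q. *)
Definition ore_dl (K : comRingType) (s d : K -> K) (Q : {poly K}) : {poly K} :=
  'X * map_poly s Q + map_poly d Q.

(* left multiplication by \partial^i is iter i (ore_dl s d);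
   P * Q = \sum_i P`_i (\partial^i Q) *)
Definition ore_mul (K : comRingType) (s d : K -> K) (P Q : {poly K}) : {poly K} :=
  \sum_(i < size P) P`_i *: iter i (ore_dl s d) Q.

Definition sigmaR (R : comRingType) (gamma tau : R) (p : {poly R}) : {poly R} :=
  p \Po (gamma *: 'X + tau%:P).

Definition is_sigma_derivation (K : comRingType) (s d : K -> K) : Prop :=
  (forall a b, d (a + b) = d a + d b) /\ (forall a b, d (a * b) = s a * d b + d a * b).

Section Setting.
Variable R : idomainType.
Local Notation RX := {poly R}.
Local Notation QX := {fraction {poly R}}.
Local Notation emb := (@FracField.tofrac {poly R}).

Variables (s : RX -> RX) (d : RX -> RX) (sQ dQ : QX -> QX).

Definition embO (P : {poly RX}) : {poly QX} := map_poly emb P.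

Definition cont (L P : {poly RX}) : Prop :=
  exists Q : {poly QX}, embO P = ore_mul sQ dQ Q (embO L).

Definition Mk (L : {poly RX}) (k : nat) (P : {poly RX}) : Prop :=
  cont L P /\ (size P <= k.+1)%N.

Definition Ik (L : {poly RX}) (k : nat) (f : RX) : Prop :=
  (exists P, Mk L k P /\ P`_k = f) \/ f = 0.

Definition left_ideal_gen (S : {poly RX} -> Prop) (P : {poly RX}) : Prop :=
  exists t : seq ({poly RX} * {poly RX}),
    (forall u, u \in t -> S u.2) /\ P = \sum_(u <- t) ore_mul s d u.1 u.2.
End Setting.

(* The map P |-> ∂P sends M_k into M_{k+1} and multiplies the k-th coefficient
   by σ, so σ(I_k) ⊆ I_{k+1} always holds. If σ(I_k) ⊇ I_{k+1}, every P in M_{k+1}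
   splits as (P - ∂Q) + ∂Q with Q and P - ∂Q in M_k, so both sets generate the same
   left ideal. Conversely, since σ is bijective, every element of the left ideal
   generated by M_k is a sum of ∂^i F_i with F_i in M_k. If such a sum has degree
   at most k + 1 and has at least three terms, comparing the coefficients of
   ∂^(k+n) shows that the last F_n has degree < k, so ∂F_n can be absorbed into
   F_(n-1); folding down to F_0 + ∂F_1 exhibits the (k+1)-st coefficient as σ of
   an element of I_k.
   Only the facts that cont(L) is a left ideal of R[x][∂] and that σ is bijective
   are used. *)

From HB Require Import structures.
From mathcomp Require Import all_boot all_order all_algebra.
From mathcomp Require Import ring.
Set Implicit Arguments. Unset Strict Implicit. Unset Printing Implicit Defensive.
Import GRing.Theory.
Local Open Scope ring_scope.

Definition is_ore_pair (K : comNzRingType) (s d : K -> K) : Prop :=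
  [/\ zmod_morphism s, {morph s : a b / a * b} & is_sigma_derivation s d].

Lemma sigma_derivation0 (K : comRingType) (s d : K -> K) :
  is_sigma_derivation s d -> d 0 = 0.
Proof. by case=> dD _; apply: (addrI (d 0)); rewrite -dD !addr0. Qed.

Section OreMul.
Variables (K : comNzRingType) (s d : K -> K).
Hypothesis sd : is_ore_pair s d.

Let s_zmod : zmod_morphism s. Proof. by case: sd. Qed.
Let s_mul : {morph s : a b / a * b}. Proof. by case: sd. Qed.
Let d_mul a b : d (a * b) = s a * d b + d a * b. Proof. by case: sd => _ _ []. Qed.
Let d_nmod : nmod_morphism d.
Proof.
by case: sd => _ _ d_sder; split; [exact: sigma_derivation0 d_sder | case: d_sder].
Qed.

HB.instance Definition _ := GRing.isZmodMorphism.Build K K s s_zmod.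
HB.instance Definition _ := GRing.isNmodMorphism.Build K K d d_nmod.

Local Notation dl := (ore_dl s d).
Local Notation om := (ore_mul s d).
Implicit Types (c : K) (P Q A B : {poly K}).

Lemma coef_ore_dl Q j : (dl Q)`_j = (if j == 0%N then 0 else s Q`_j.-1) + d Q`_j.
Proof. by rewrite coefD coefXM !coef_map. Qed.

Fact ore_dl_is_nmod_morphism : nmod_morphism dl.
Proof.
split=> [|A B]; first by rewrite /ore_dl !raddf0 mulr0 addr0.
by rewrite /ore_dl !raddfD mulrDr addrACA.
Qed.
HB.instance Definition _ := GRing.isNmodMorphism.Build _ _ dl ore_dl_is_nmod_morphism.

Lemma iter_ore_dl0 i : iter i dl 0 = 0.
Proof. by elim: i => // i IH; rewrite iterS IH raddf0. Qed.

Lemma iter_ore_dlD i : {morph iter i dl : A B / A + B}.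
Proof. by elim: i => // i IH A B; rewrite !iterS IH raddfD. Qed.

Lemma ore_dlZ c Q : dl (c *: Q) = s c *: dl Q + d c *: Q.
Proof.
apply/polyP=> j; rewrite coef_ore_dl [RHS]coefD !coefZ coef_ore_dl d_mul.
by case: (j == 0%N); rewrite ?s_mul; ring.
Qed.

Lemma size_ore_dl Q : (size (dl Q) <= (size Q).+1)%N.
Proof.
apply/leq_sizeP=> [[|j]] // hj.
by rewrite coef_ore_dl /= !nth_default ?raddf0 ?addr0 // ltnW.
Qed.

Lemma size_iter_ore_dl i Q : (size (iter i dl Q) <= size Q + i)%N.
Proof.
elim: i => [|i IH]; first by rewrite addn0.
by rewrite iterS addnS; apply: leq_trans (size_ore_dl _) _.
Qed.

Lemma coef_iter_ore_dl_top i n Q :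
  (size Q <= n.+1)%N -> (iter i dl Q)`_(n + i) = iter i s Q`_n.
Proof.
move=> sQ; elim: i => [|i IH]; first by rewrite addn0.
rewrite !iterS coef_ore_dl addnS /= IH [_`_(n + i).+1]nth_default ?raddf0 ?addr0 //.
by apply: leq_trans (size_iter_ore_dl i Q) _; rewrite -addSn leq_add2r.
Qed.

Lemma ore_mul_widen n P Q :
  (size P <= n)%N -> om P Q = \sum_(i < n) P`_i *: iter i dl Q.
Proof.
move=> sP; rewrite /ore_mul (big_ord_widen _ (fun i => P`_i *: iter i dl Q) sP).
rewrite big_mkcond /=; apply: eq_bigr => i _.
by case: ltnP => // /(nth_default 0) ->; rewrite scale0r.
Qed.

Lemma ore_mul0l Q : om 0 Q = 0.
Proof. by rewrite /ore_mul size_poly0 big_ord0. Qed.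

Lemma ore_mul1l Q : om 1 Q = Q.
Proof. by rewrite /ore_mul size_poly1 big_ord1 coef1 scale1r. Qed.

Lemma ore_mulDl P1 P2 Q : om (P1 + P2) Q = om P1 Q + om P2 Q.
Proof.
pose n := maxn (size P1) (size P2).
rewrite !(@ore_mul_widen n) ?leq_maxl ?leq_maxr ?size_polyD // -big_split.
by apply: eq_bigr => i _; rewrite coefD scalerDl.
Qed.

Lemma ore_mulZl c P Q : om (c *: P) Q = c *: om P Q.
Proof.
rewrite (ore_mul_widen _ (size_scale_leq c P)) [om P Q](ore_mul_widen _ (leqnn _)).
by rewrite scaler_sumr; apply: eq_bigr => i _; rewrite coefZ scalerA.
Qed.

Lemma ore_mulDr P Q1 Q2 : om P (Q1 + Q2) = om P Q1 + om P Q2.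
Proof. by rewrite -big_split; apply: eq_bigr => i _; rewrite iter_ore_dlD scalerDr. Qed.

Lemma ore_dl_mul P Q : dl (om P Q) = om (dl P) Q.
Proof.
rewrite (ore_mul_widen _ (size_ore_dl P)) /ore_mul raddf_sum /=.
under eq_bigr do rewrite ore_dlZ.
under [RHS]eq_bigr do rewrite coef_ore_dl scalerDl.
rewrite !big_split /= big_ord_recl /= scale0r add0r big_ord_recr /=.
by rewrite [P`_(size P)]nth_default // raddf0 scale0r addr0.
Qed.

Lemma ore_mul_mulX P Q : om (P * 'X) Q = om P (dl Q).
Proof.
have sPX : (size (P * 'X)%R <= (size P).+1)%N.
  by rewrite (leq_trans (size_polyMleq _ _)) // size_polyX addn2.
rewrite (ore_mul_widen _ sPX) big_ord_recl coefMX scale0r add0r.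
by apply: eq_bigr => i _; rewrite coefMX /= add0n -iterS iterSr.
Qed.
End OreMul.

Definition dpow_span (K : comNzRingType) (s d : K -> K) (M : {poly K} -> Prop)
    (P : {poly K}) : Prop :=
  exists2 F : nat -> {poly K}, (forall i, M (F i)) &
    exists2 m, (forall i, (m <= i)%N -> F i = 0) &
      P = \sum_(i < m) iter i (ore_dl s d) (F i).

Section DpowSpan.
Variables (K : comNzRingType) (s s' d : K -> K).
Hypotheses (sd : is_ore_pair s d) (s'K : cancel s' s).
Variable M : {poly K} -> Prop.
Hypotheses (M0 : M 0) (MD : forall P Q, M P -> M Q -> M (P + Q)).
Hypothesis MZ : forall c P, M P -> M (c *: P).

Local Notation dl := (ore_dl s d).
Local Notation span := (dpow_span s d M).
Implicit Types (c : K) (P Q A : {poly K}) (F : nat -> {poly K}).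

Lemma sum_iter_ore_dl_widen F m n : (forall i, (m <= i)%N -> F i = 0) -> (m <= n)%N ->
  \sum_(i < n) iter i dl (F i) = \sum_(i < m) iter i dl (F i).
Proof.
move=> F0 le_mn; rewrite [RHS](big_ord_widen _ (fun i => iter i dl (F i)) le_mn).
rewrite [RHS]big_mkcond; apply: eq_bigr => i _.
by case: ltnP => // /F0 ->; rewrite (iter_ore_dl0 sd).
Qed.

Lemma dpow_span0 : span 0.
Proof. by exists (fun=> 0) => //; exists 0%N => //; rewrite big_ord0. Qed.

Lemma dpow_span_of Q : M Q -> span Q.
Proof.
move=> MQ; exists (fun i => if i == 0%N then Q else 0) => [i|]; first by case: eqP.
by exists 1%N => [[]|] //; rewrite big_ord1.
Qed.

Lemma dpow_spanD P1 P2 : span P1 -> span P2 -> span (P1 + P2).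
Proof.
move=> [F1 MF1 [m1 F10 ->]] [F2 MF2 [m2 F20 ->]].
exists (fun i => F1 i + F2 i) => [i|]; first exact: MD.
exists (m1 + m2)%N => [i le_mi|].
  by rewrite F10 ?F20 ?addr0 // (leq_trans _ le_mi) // ?leq_addl ?leq_addr.
under [RHS]eq_bigr do rewrite (iter_ore_dlD sd).
by rewrite big_split /= (sum_iter_ore_dl_widen F10 (leq_addr m2 m1))
  (sum_iter_ore_dl_widen F20 (leq_addl m1 m2)).
Qed.

Lemma dpow_span_dl P : span P -> span (dl P).
Proof.
move=> [F MF [m F0 ->]]; exists (fun i => if i is j.+1 then F j else 0) => [[]|] //.
exists m.+1 => [[|i] //|]; first exact: F0.
by rewrite big_ord_recl add0r raddf_sum.
Qed.

Lemma dpow_spanZ_iter c i Q : M Q -> span (c *: iter i dl Q).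
Proof.
move=> MQ; elim: i c => [|i IH] c; first exact/dpow_span_of/MZ.
(* c ∂^(i+1) = ∂ σ^-1(c) ∂^i - δ(σ^-1 c) ∂^i *)
have -> : c *: iter i.+1 dl Q =
    dl (s' c *: iter i dl Q) + (- d (s' c)) *: iter i dl Q.
  by rewrite (ore_dlZ sd) s'K iterS scaleNr addrK.
by apply: dpow_spanD; [apply: dpow_span_dl |]; apply: IH.
Qed.

Lemma dpow_span_ore_mul A Q : M Q -> span (ore_mul s d A Q).
Proof.
move=> MQ; apply: (big_ind span dpow_span0 dpow_spanD) => i _.
exact: dpow_spanZ_iter.
Qed.
End DpowSpan.

(* [Mk sQ dQ L k] and [Ik sQ dQ L k] are [Mk_of (cont sQ dQ L) k] and
   [Ik_of (cont sQ dQ L) k]. *)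
Definition Mk_of (K : nzSemiRingType) (C : {poly K} -> Prop) (k : nat) (P : {poly K}) :=
  C P /\ (size P <= k.+1)%N.

Definition Ik_of (K : nzSemiRingType) (C : {poly K} -> Prop) (k : nat) (f : K) :=
  (exists P, Mk_of C k P /\ P`_k = f) \/ f = 0.

Section Filtration.
Variable R : idomainType.
Variables (s s' d : {poly R} -> {poly R}).
Hypotheses (sd : is_ore_pair s d) (sK : cancel s s') (s'K : cancel s' s).
Variable C : {poly {poly R}} -> Prop.
Hypotheses (C0 : C 0) (CD : forall P Q, C P -> C Q -> C (P + Q)).
Hypotheses (CZ : forall c P, C P -> C (c *: P)) (C_dl : forall P, C P -> C (ore_dl s d P)).

Local Notation dl := (ore_dl s d).
Local Notation gen := (left_ideal_gen s d).
Implicit Types (P Q : {poly {poly R}}) (F : nat -> {poly {poly R}}).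

Let s0 : s 0 = 0.
Proof. by case: sd => s_zmod _ _; have := s_zmod 0 0; rewrite !subrr. Qed.
Let s_eq0 g : s g = 0 -> g = 0.
Proof. by move=> sg0; apply: (can_inj sK); rewrite sg0 s0. Qed.
Let d0 : d 0 = 0. Proof. by case: sd => _ _ /sigma_derivation0. Qed.

Lemma left_ideal_gen_of S P : S P -> gen S P.
Proof.
move=> SP; exists [:: (1, P)]; split=> [u|]; first by rewrite inE => /eqP ->.
by rewrite big_seq1 ore_mul1l.
Qed.

Lemma left_ideal_gen_mono (S T : {poly {poly R}} -> Prop) P :
  (forall Q, S Q -> T Q) -> gen S P -> gen T P.
Proof. by move=> ST [t [St ->]]; exists t; split=> // u /St /ST. Qed.

Lemma dpow_span_of_left_ideal_gen (S : {poly {poly R}} -> Prop) :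
    S 0 -> (forall P Q, S P -> S Q -> S (P + Q)) -> (forall c P, S P -> S (c *: P)) ->
  forall P, gen S P -> dpow_span s d S P.
Proof.
move=> S0 SD SZ P [t [St ->]]; rewrite big_seq.
apply: (big_ind _ (dpow_span0 s d S0) (dpow_spanD sd SD)) => u /St Su.
exact: (dpow_span_ore_mul sd s'K S0 SD SZ).
Qed.

Lemma Mk_of0 n : Mk_of C n 0.
Proof. by split; rewrite ?size_poly0. Qed.

Lemma Mk_ofD n P Q : Mk_of C n P -> Mk_of C n Q -> Mk_of C n (P + Q).
Proof.
move=> [CP sP] [CQ sQ]; split; first exact: CD.
by rewrite (leq_trans (size_polyD _ _)) // geq_max sP sQ.
Qed.

Lemma Mk_ofZ n c P : Mk_of C n P -> Mk_of C n (c *: P).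
Proof.
by move=> [CP sP]; split; [exact: CZ | exact: leq_trans (size_scale_leq _ _) sP].
Qed.

Lemma Mk_of_dl n P : C P -> (size P <= n)%N -> Mk_of C n (dl P).
Proof. by move=> CP sP; split; [exact: C_dl | exact: leq_trans (size_ore_dl sd P) _]. Qed.

Lemma coef_ore_dl_top n P : (size P <= n.+1)%N -> (dl P)`_n.+1 = s P`_n.
Proof. by move=> sP; rewrite (coef_ore_dl sd) /= [P`_n.+1]nth_default // d0 addr0. Qed.

Variable k : nat.
Local Notation M := (Mk_of C k).

Lemma Ik_of_sigma g : Ik_of C k g -> Ik_of C k.+1 (s g).
Proof.
case=> [[Q [[CQ sQ] <-]]|->]; last by right.
by left; exists (dl Q); split; [apply: Mk_of_dl | exact: coef_ore_dl_top].
Qed.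

Lemma coef_sum_iter_ore_dl_top n F : (forall i, (size (F i) <= k.+1)%N) ->
  (\sum_(i < n.+1) iter i dl (F i))`_(k + n) = iter n s (F n)`_k.
Proof.
move=> sF; rewrite big_ord_recr coefD (coef_iter_ore_dl_top sd) // coef_sum big1 ?add0r //.
move=> i _; rewrite nth_default // (leq_trans (size_iter_ore_dl sd _ _)) //.
by rewrite (leq_trans (leq_add (sF _) (leqnn _))) // addSn -addnS leq_add2l /=.
Qed.

Lemma iter_sigma_eq0 n g : iter n s g = 0 -> g = 0.
Proof. by elim: n => // n IH; rewrite iterS => /s_eq0/IH. Qed.

Lemma sum_iter_ore_dl_fold n F : (forall i, M (F i)) ->
    (size (\sum_(i < n.+3) iter i dl (F i))%R <= k.+2)%N ->
  exists2 F' : nat -> {poly {poly R}}, (forall i, M (F' i)) &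
    \sum_(i < n.+3) iter i dl (F i) = \sum_(i < n.+2) iter i dl (F' i).
Proof.
move=> MF sS; have sF i : (size (F i) <= k.+1)%N by case: (MF i).
have Fk0 : (F n.+2)`_k = 0.
  apply: (@iter_sigma_eq0 n.+2); rewrite -coef_sum_iter_ore_dl_top //.
  by rewrite nth_default // (leq_trans sS) // -addn2 leq_add2l.
have sFk : (size (F n.+2) <= k)%N.
  apply/leq_sizeP => j; rewrite leq_eqVlt => /orP[/eqP <- // | lt_kj].
  exact: nth_default (leq_trans (sF _) lt_kj).
exists (fun i => if i == n.+1 then F i + dl (F n.+2) else F i) => [i|].
  by case: eqP => _ //; apply: Mk_ofD => //; apply: Mk_of_dl sFk; case: (MF n.+2).
rewrite !big_ord_recr /= eqxx (ltn_eqF (ltnSn n)) (iter_ore_dlD sd).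
rewrite (raddfD dl (iter n dl (F n.+1))) -iterSr iterS [RHS]addrA.
by congr (_ + _ + _ + _); apply: eq_bigr => i _; rewrite ltn_eqF // leqW.
Qed.

Lemma coef_sum_iter_ore_dl_succ n F : (forall i, M (F i)) ->
    (size (\sum_(i < n.+2) iter i dl (F i))%R <= k.+2)%N ->
  exists2 g, Ik_of C k g & (\sum_(i < n.+2) iter i dl (F i))`_k.+1 = s g.
Proof.
elim: n F => [|n IH] F MF sS.
  exists (F 1%N)`_k; first by left; exists (F 1%N).
  have [[_ sF0] [_ sF1]] := (MF 0%N, MF 1%N).
  by rewrite big_ord_recr big_ord1 /= coefD coef_ore_dl_top // nth_default ?add0r.
have [F' MF' eS] := sum_iter_ore_dl_fold MF sS.
by rewrite eS in sS *; apply: IH.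
Qed.

Lemma coef_dpow_span_succ P : dpow_span s d M P -> (size P <= k.+2)%N ->
  exists2 g, Ik_of C k g & P`_k.+1 = s g.
Proof.
move=> [F MF [m F0 ->]].
rewrite -(sum_iter_ore_dl_widen sd F0 (leqW (leqnSn m))).
exact: coef_sum_iter_ore_dl_succ.
Qed.

Section Lifting.
Hypothesis IkS : forall f, Ik_of C k.+1 f -> exists2 g, Ik_of C k g & f = s g.

Lemma Mk_of_succ_split P : Mk_of C k.+1 P -> exists2 Q, M Q & M (P - dl Q).
Proof.
move=> [CP sP].
have [g Ig Pk] : exists2 g, Ik_of C k g & P`_k.+1 = s g by apply: IkS; left; exists P.
have [Q [[CQ sQ] Qk]] : exists Q, M Q /\ Q`_k = g.
  by case: Ig => [|->]; [|exists 0; rewrite coef0; split; first exact: Mk_of0].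
exists Q => //; split; first by apply: CD CP _; rewrite -scaleN1r; exact/CZ/C_dl.
apply/leq_sizeP => j; rewrite leq_eqVlt => /orP[/eqP <- | lt_kj].
  by rewrite coefB coef_ore_dl_top // Qk -Pk subrr.
rewrite coefB !nth_default ?subr0 // (leq_trans _ lt_kj) //.
exact: leq_trans (size_ore_dl sd Q) _.
Qed.

Lemma left_ideal_gen_Mk_of_succ P : gen (Mk_of C k.+1) P -> gen M P.
Proof.
move=> [t [Mt ->]]; elim: t Mt => [|[A Q] t IH] Mt.
  by exists [::]; split; rewrite ?big_nil.
have [Q' MQ' MQQ'] := Mk_of_succ_split (Mt _ (mem_head _ _)).
have [t' [Mt' et']] : gen M (\sum_(u <- t) ore_mul s d u.1 u.2).
  by apply: IH => u tu; apply: Mt; rewrite inE tu orbT.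
exists [:: (A, Q - dl Q'), (A * 'X, Q') & t']; split.
  by move=> u; rewrite !inE => /orP[/eqP -> | /orP[/eqP -> | /Mt']].
by rewrite !big_cons et' /= ore_mul_mulX addrA -(ore_mulDr sd) subrK.
Qed.
End Lifting.

Theorem left_ideal_gen_Mk_of_succP :
  (forall P, gen M P <-> gen (Mk_of C k.+1) P) <->
  (forall f, (exists g, Ik_of C k g /\ f = s g) <-> Ik_of C k.+1 f).
Proof.
split=> [genE f | IkE P]; last first.
  split; last by apply: left_ideal_gen_Mk_of_succ => f /IkE[g [Ig ->]]; exists g.
  by apply: left_ideal_gen_mono => Q [CQ sQ]; split=> //; exact: leqW.
split=> [[g [Ig ->]] | [[P [MP <-]] | ->]]; first exact: Ik_of_sigma.
  have /genE/(dpow_span_of_left_ideal_gen (Mk_of0 k) (@Mk_ofD k) (@Mk_ofZ k)) spanP :=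
    left_ideal_gen_of MP.
  have [g Ig Pk] := coef_dpow_span_succ spanP (proj2 MP).
  by exists g.
by exists 0; split; [right | rewrite s0].
Qed.
End Filtration.

Section Content.
Variable R : idomainType.
Local Notation emb := (@FracField.tofrac {poly R}).
Variables (s d : {poly R} -> {poly R}) (sQ dQ : {fraction {poly R}} -> {fraction {poly R}}).
Hypotheses (sd : is_ore_pair s d) (sdQ : is_ore_pair sQ dQ).
Hypothesis sQ_emb : forall p, sQ (emb p) = emb (s p).
Hypothesis dQ_emb : forall p, dQ (emb p) = emb (d p).
Variable L : {poly {poly R}}.
Local Notation C := (cont sQ dQ L).
Implicit Types P : {poly {poly R}}.

Lemma embO_ore_dl P : embO (ore_dl s d P) = ore_dl sQ dQ (embO P).
Proof.
apply/polyP=> j.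
rewrite /embO coef_map (coef_ore_dl sd) (coef_ore_dl sdQ) !coef_map.
by rewrite raddfD /=; case: (j == 0%N); rewrite ?raddf0 /= ?sQ_emb dQ_emb.
Qed.

Lemma cont0 : C 0.
Proof. by exists 0; rewrite /embO raddf0 ore_mul0l. Qed.

Lemma contD P1 P2 : C P1 -> C P2 -> C (P1 + P2).
Proof.
by move=> [Q1 e1] [Q2 e2]; exists (Q1 + Q2); rewrite ore_mulDl -e1 -e2 /embO raddfD.
Qed.

Lemma contZ c P : C P -> C (c *: P).
Proof. by move=> [Q e]; exists (emb c *: Q); rewrite ore_mulZl -e /embO map_polyZ. Qed.

Lemma cont_dl P : C P -> C (ore_dl s d P).
Proof.
by move=> [Q e]; exists (ore_dl sQ dQ Q); rewrite embO_ore_dl e (ore_dl_mul sdQ).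
Qed.
End Content.

Section Shift.
Variables (R : idomainType) (gamma tau : R).
Local Notation sigma := (sigmaR gamma tau).

Definition sigmaR_inv (p : {poly R}) := p \Po (gamma^-1 *: ('X - tau%:P)).

Lemma sigmaR_ore_pair delta : is_sigma_derivation sigma delta -> is_ore_pair sigma delta.
Proof. by split=> // p q; rewrite /sigmaR (comp_polyB, comp_polyM). Qed.

Hypothesis gamma_unit : gamma \is a GRing.unit.

Lemma sigmaRK : cancel sigma sigmaR_inv.
Proof.
move=> p; rewrite /sigmaR /sigmaR_inv -comp_polyA comp_polyD comp_polyZ comp_polyX.
by rewrite comp_polyC scalerA mulrV // scale1r subrK comp_polyXr.
Qed.

Lemma sigmaR_invK : cancel sigmaR_inv sigma.
Proof.
move=> p; rewrite /sigmaR /sigmaR_inv -comp_polyA comp_polyZ comp_polyB comp_polyX.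
by rewrite comp_polyC addrK scalerA mulVr // scale1r comp_polyXr.
Qed.
End Shift.

Theorem mainTheorem13
  (R : idomainType) (HPID : is_PID R)
  (gamma tau : R) (Hgamma : gamma \is a GRing.unit)
  (delta : {poly R} -> {poly R})
  (Hdelta_der : is_sigma_derivation (sigmaR gamma tau) delta)
  (Hdelta_lin : forall (c : R) (p : {poly R}), delta (c *: p) = c *: delta p)
  (Hdelta_x : (size (delta 'X) <= 2)%N)
  (* extensions of sigma and delta to Q_R(x) *)
  (sigQ delQ : {fraction {poly R}} -> {fraction {poly R}})
  (HsigQ_rmorph : zmod_morphism sigQ /\ monoid_morphism sigQ)
  (HsigQ_ext : forall p : {poly R},
      sigQ (FracField.tofrac p) = FracField.tofrac (sigmaR gamma tau p))
  (HdelQ_der : is_sigma_derivation sigQ delQ)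
  (HdelQ_ext : forall p : {poly R},
      delQ (FracField.tofrac p) = FracField.tofrac (delta p))
  (L : {poly {poly R}}) (HL : (0 < (size L).-1)%N)
  (k : nat) (Hk : ((size L).-1 <= k)%N) :
  (forall P, left_ideal_gen (sigmaR gamma tau) delta (Mk sigQ delQ L k) P <->
             left_ideal_gen (sigmaR gamma tau) delta (Mk sigQ delQ L k.+1) P)
  <->
  (forall f : {poly R},
     (exists g, Ik sigQ delQ L k g /\ f = sigmaR gamma tau g) <-> Ik sigQ delQ L k.+1 f).
Proof.
have sdR := sigmaR_ore_pair Hdelta_der.
have sdQ : is_ore_pair sigQ delQ by case: HsigQ_rmorph => ? [_ ?]; split.
apply: (left_ideal_gen_Mk_of_succP (C := cont sigQ delQ L) sdR (sigmaRK tau Hgamma)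
  (sigmaR_invK tau Hgamma)) => [|P Q|c P|P]; [exact: cont0 | exact: contD | exact: contZ |].
exact: (cont_dl sdR sdQ HsigQ_ext HdelQ_ext).
Qed.
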